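(* Let $k$ be a positive integer and let $D=(V,A,w)$ be a weighted digraph with maximum out-degree $\Delta^+(D)\le k$ or maximum in-degree $\Delta^-(D)\le k$. Then $\mathrm{mac}(D)\ge\left(\frac14+\frac{1}{8k+4}\right)w(D)$.
   Context: A weighted digraph $D=(V,A,w)$ is a digraph without loops or parallel arcs (opposite arcs allowed) with weights $w:A\to\mathbb{R}_{\ge0}$; $w(D)$ is the total arc weight. Degrees are numbers of arcs (unweighted). For a partition $(X,Y)$ of $V$, $w(X,Y)$ is the total weight of arcs from $X$ to $Y$, and $\mathrm{mac}(D)=\max_{(X,Y)} w(X,Y)$ over all partitions. *)

From mathcomp Require Import all_boot all_order all_algebra.
Set Implicit Arguments. Unset Strict Implicit. Unset Printing Implicit Defensive.
Import Order.TTheory GRing.Theory Num.Theory.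
Local Open Scope ring_scope.

(* A weighted digraph on a finite vertex type V: arc relation [arc] (no loops:
   irreflexive; at most one arc per ordered pair, opposite arcs allowed) and
   weights [w x y], meaningful (and required nonnegative) only on arcs. *)

Definition loopless (V : finType) (arc : rel V) : Prop := forall x, ~~ arc x x.

Definition nonneg_weights (R : realFieldType) (V : finType) (arc : rel V)
  (w : V -> V -> R) : Prop := forall x y, arc x y -> 0 <= w x y.

Definition outdeg (V : finType) (arc : rel V) (x : V) : nat := #|[set y | arc x y]|.
Definition indeg (V : finType) (arc : rel V) (y : V) : nat := #|[set x | arc x y]|.

Definition total_weight (R : realFieldType) (V : finType) (arc : rel V)
  (w : V -> V -> R) : R :=
  \sum_(x : V) \sum_(y : V | arc x y) w x y.

Definition cut_weight (R : realFieldType) (V : finType) (arc : rel V)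
  (w : V -> V -> R) (X : {set V}) : R :=
  \sum_(x in X) \sum_(y in ~: X | arc x y) w x y.

Definition mac (R : realFieldType) (V : finType) (arc : rel V)
  (w : V -> V -> R) : R :=
  \big[Num.max/0]_(X : {set V}) cut_weight arc w X.

From mathcomp Require Import all_boot all_order all_algebra.
From mathcomp Require Import zify ring lra.
Import Order.TTheory GRing.Theory Num.Theory.

Set Implicit Arguments.
Unset Strict Implicit.
Unset Printing Implicit Defensive.

(* If every out-degree (or every in-degree) of D is at most k, then every
   induced subdigraph D[S] has at most k|S| arcs, so some vertex of S has at
   most 2k neighbours in S: D is 2k-degenerate.  Greedy colouring then gives a
   proper colouring c of D with 2k + 1 colours.  For a (k+1)-set T of colours
   let X_T be the vertices coloured in T; an arc xy (c x <> c y) is cut by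
   (X_T, V \ X_T) for exactly 'C(2k - 1, k) of the 'C(2k + 1, k + 1) sets T. *)

Lemma card_setI_pred (T : finType) (S : {set T}) (P : pred T) :
  #|[set y in S | P y]| = \sum_(y in S) (P y : nat).
Proof.
rewrite -sum1_card big_mkcond [RHS]big_mkcond /=; apply: eq_bigr => y _.
by rewrite inE; case: (y \in S); case: (P y).
Qed.

Section Degeneracy.

Variables (V : finType) (arc : rel V).

Definition nbhd_in (S : {set V}) (x : V) : {set V} :=
  [set y in S | arc x y || arc y x].

Definition degenerate (d : nat) : Prop :=
  forall S : {set V}, S != set0 -> exists2 x, x \in S & (#|nbhd_in S x| <= d)%N.

Lemma sum_outdeg_in_eq_sum_indeg_in (S : {set V}) :
  \sum_(x in S) #|[set y in S | arc x y]| = \sum_(x in S) #|[set y in S | arc y x]|.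
Proof.
under eq_bigr do rewrite card_setI_pred.
under [RHS]eq_bigr do rewrite card_setI_pred.
exact: exchange_big.
Qed.

Lemma sum_outdeg_in_le (k : nat) (S : {set V}) :
  ((forall x, (outdeg arc x <= k)%N) \/ (forall x, (indeg arc x <= k)%N)) ->
  (\sum_(x in S) #|[set y in S | arc x y]| <= #|S| * k)%N.
Proof.
move=> hdeg; rewrite -sum_nat_const.
case: hdeg => hd; last rewrite sum_outdeg_in_eq_sum_indeg_in.
all: apply: leq_sum => x _; apply: leq_trans (hd x); apply: subset_leq_card.
all: by apply/subsetP => y; rewrite !inE => /andP[].
Qed.

(* Hence such a digraph is 2k-degenerate: some vertex of S has total degree
   at most 2k, the average total degree in D[S]. *)
Lemma bounded_degree_degenerate (k : nat) :
  ((forall x, (outdeg arc x <= k)%N) \/ (forall x, (indeg arc x <= k)%N)) ->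
  degenerate (2 * k).
Proof.
move=> hdeg S S0.
pose deg x := (#|[set y in S | arc x y]| + #|[set y in S | arc y x]|)%N.
have sum_deg : (\sum_(x in S) deg x <= #|S| * (2 * k))%N.
  rewrite big_split /= -sum_outdeg_in_eq_sum_indeg_in.
  have := @sum_outdeg_in_le k S hdeg; lia.
have [x xS deg_x] : exists2 x, x \in S & (deg x <= 2 * k)%N.
  apply/exists_inP; apply: contraT; rewrite negb_exists_in => /forall_inP big_deg.
  have : (\sum_(x in S) (2 * k).+1 <= #|S| * (2 * k))%N.
    by apply: leq_trans sum_deg; apply: leq_sum => x /big_deg; rewrite -ltnNge.
  have : (0 < #|S|)%N by rewrite card_gt0.
  rewrite sum_nat_const; nia.
exists x => //; apply: leq_trans deg_x.
have -> : nbhd_in S x = [set y in S | arc x y] :|: [set y in S | arc y x].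
  by apply/setP => y; rewrite !inE andb_orr.
exact: leq_card_setU.
Qed.

(* Greedy colouring: a loopless d-degenerate digraph has a proper colouring
   with any n > d colours (removing a vertex of low degree, colouring the
   rest, and giving it a colour unused by its at most d neighbours). *)
Lemma degenerate_coloring (d n : nat) :
  loopless arc -> degenerate d -> (d < n)%N ->
  exists c : V -> 'I_n, forall x y, arc x y -> c x != c y.
Proof.
move=> noloop hdeg dn.
suff col_on : forall S : {set V}, exists c : V -> 'I_n,
    forall x y, x \in S -> y \in S -> arc x y -> c x != c y.
  by have [c hc] := col_on [set: V]; exists c => x y; apply: hc; rewrite inE.
move=> S; have [m] := ubnP #|S|; elim: m S => // m IH S hS.
have [->|S0] := eqVneq S set0.
  by exists (fun _ => Ordinal (leq_ltn_trans (leq0n d) dn)) => x y; rewrite inE.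
have [x xS deg_x] := hdeg S S0.
have [c hc] : exists c : V -> 'I_n,
    forall u v, u \in S :\ x -> v \in S :\ x -> arc u v -> c u != c v.
  by apply: IH; move: hS; rewrite (cardsD1 x S) xS; lia.
have [col col_free] : exists col, col \notin c @: nbhd_in S x.
  suff /set0Pn[col] : ~: (c @: nbhd_in S x) != set0 by rewrite inE; exists col.
  rewrite -card_gt0; have := cardsC (c @: nbhd_in S x).
  have := leq_imset_card c (nbhd_in S x); rewrite card_ord; lia.
have col_ok z : z \in S -> arc x z || arc z x -> col != c z.
  by move=> zS hz; apply: contraNneq col_free => ->; rewrite imset_f // inE zS.
exists (fun z => if z == x then col else c z) => u v uS vS huv.
case: (eqVneq u x) => [eux|nux]; case: (eqVneq v x) => [evx|nvx].
- by move: huv; rewrite eux evx (negbTE (noloop x)).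
- by apply: col_ok => //; rewrite -eux huv.
- by rewrite eq_sym; apply: col_ok => //; rewrite -evx huv orbT.
- by apply: hc => //; rewrite !inE ?nux ?nvx.
Qed.

End Degeneracy.

(* Among the (m+1)-subsets of a finite type, those containing a but not b are
   counted by choosing the remaining m elements outside {a, b}. *)
Lemma card_draws_separating (T : finType) (m : nat) (a b : T) : a != b ->
  #|[set A : {set T} | [&& #|A| == m.+1, a \in A & b \notin A]]| =
  'C(#|T| - 2, m).
Proof.
move=> ab.
pose outside_ab := [set A : {set T} | A \subset ~: [set a; b] & #|A| == m].
have -> : [set A : {set T} | [&& #|A| == m.+1, a \in A & b \notin A]] =
          [set a |: B | B in outside_ab].
  apply/setP => A; rewrite !inE; apply/idP/imsetP.
  - case/and3P => /eqP cardA aA bA; exists (A :\ a); last by rewrite setD1K.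
    rewrite inE; apply/andP; split.
      apply/subsetP => z; rewrite !inE negb_or => /andP[-> zA] /=.
      by apply: contraNneq bA => <-.
    by move: cardA; rewrite (cardsD1 a A) aA add1n => -[->].
  - case=> B; rewrite inE => /andP[/subsetP sB /eqP cardB] ->.
    have aB : a \notin B by apply/negP => /sB; rewrite !inE eqxx.
    have bB : b \notin B by apply/negP => /sB; rewrite !inE eqxx orbT.
    by rewrite cardsU1 aB cardB setU11 !inE negb_or bB add1n eqxx eq_sym ab.
rewrite card_in_imset; last first.
  move=> B1 B2; rewrite !inE => /andP[/subsetP s1 _] /andP[/subsetP s2 _] eqB.
  have a1 : a \notin B1 by apply/negP => /s1; rewrite !inE eqxx.
  have a2 : a \notin B2 by apply/negP => /s2; rewrite !inE eqxx.
  by rewrite -(setU1K a1) -(setU1K a2) eqB.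
rewrite cards_draws; congr 'C(_, _).
by have := cardsC [set a; b]; rewrite cards2 ab; lia.
Qed.

Local Open Scope ring_scope.

Section Averaging.

Variables (R : realFieldType) (V : finType) (arc : rel V) (w : V -> V -> R).

Lemma cut_weight_le_mac (X : {set V}) : cut_weight arc w X <= mac arc w.
Proof. by rewrite /mac (bigD1 X) //= le_max lexx. Qed.

Lemma cut_weight_indicator (X : {set V}) :
  cut_weight arc w X =
  \sum_x \sum_(y | arc x y) ((x \in X) && (y \notin X))%:R * w x y.
Proof.
rewrite /cut_weight big_mkcond; apply: eq_bigr => x _.
case: (boolP (x \in X)) => xX /=; last by rewrite big1 // => y _; rewrite mul0r.
rewrite big_mkcond [RHS]big_mkcond; apply: eq_bigr => y _; rewrite !inE.
by case: (y \in X); case: (arc x y); rewrite /= ?mul1r ?mul0r.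
Qed.

(* Averaging over colour classes: given a proper colouring with n + 2 colours,
   put in X the vertices whose colour lies in a random (m+1)-set of colours.
   Each arc is cut by exactly 'C(n, m) of the 'C(n + 2, m + 1) choices, so
   some choice cuts at least a 'C(n, m) / 'C(n + 2, m + 1) fraction of w(D). *)
Lemma coloring_average_cut (n m : nat) (c : V -> 'I_n.+2) :
  (forall x y, arc x y -> c x != c y) ->
  'C(n, m)%:R * total_weight arc w <= 'C(n.+2, m.+1)%:R * mac arc w.
Proof.
move=> proper_c.
pose F := [set T : {set 'I_n.+2} | #|T| == m.+1].
pose X (T : {set 'I_n.+2}) := [set x | c x \in T].
have cardF : #|F| = 'C(n.+2, m.+1) by rewrite card_draws card_ord.
have sum_cuts : \sum_(T in F) cut_weight arc w (X T) = 'C(n, m)%:R * total_weight arc w.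
  under eq_bigr do rewrite cut_weight_indicator.
  rewrite /total_weight mulr_sumr exchange_big; apply: eq_bigr => x _.
  rewrite mulr_sumr exchange_big; apply: eq_bigr => y arc_xy.
  rewrite -mulr_suml -natr_sum -card_setI_pred.
  under eq_finset do rewrite !inE.
  by rewrite card_draws_separating ?card_ord ?subn2 //; apply: proper_c.
rewrite -sum_cuts -cardF mulr_natl -sumr_const.
by apply: ler_sum => T _; apply: cut_weight_le_mac.
Qed.

End Averaging.

Lemma mul_bin_shift2 (n m : nat) :
  ('C(n.+2, m.+1) * m.+1 * (n.+1 - m) = 'C(n, m) * (n.+2 * n.+1))%N.
Proof.
have diag := mul_bin_diag n.+2 m; have down := mul_bin_down n.+1 m.
by rewrite (mulnC 'C(_, _)) -diag -mulnA (mulnC 'C(_, _)) -down mulnA mulnC.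
Qed.

(* With 2k + 1 colours and k-sets, k = j + 1, the averaging fraction is
   'C(2k - 1, k) / 'C(2k + 1, k + 1) = (k + 1) / (4k + 2) = 1/4 + 1/(8k + 4). *)
Lemma binomial_ratio (R : realFieldType) (j : nat) :
  'C((2 * j + 1)%N, j.+1)%:R =
  'C((2 * j + 1)%N.+2, j.+2)%:R * (1 / 4 + 1 / (8 * (j.+1)%:R + 4)) :> R.
Proof.
have shift := mul_bin_shift2 (2 * j + 1)%N j.+1.
have gap : ((2 * j + 1).+1 - j.+1 = j.+1)%N by lia.
rewrite gap in shift.
have denom_neq0 : ((2 * j + 1).+2 * (2 * j + 1).+1)%N%:R != 0 :> R.
  by rewrite pnatr_eq0 muln_eq0.
apply: (mulIf denom_neq0); rewrite -[LHS]natrM -shift !natrM.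
have j_ge0 : (0 : R) <= j%:R by rewrite ler0n.
rewrite -!nat1r natrD natrM; field.
by rewrite lt0r_neq0 //; lra.
Qed.

Theorem mainTheorem2 (R : realFieldType) (V : finType) (arc : rel V)
  (w : V -> V -> R) (k : nat) :
  (0 < k)%N ->
  loopless arc ->
  nonneg_weights arc w ->
  ((forall x, (outdeg arc x <= k)%N) \/ (forall x, (indeg arc x <= k)%N)) ->
  mac arc w >= (1 / 4 + 1 / (8 * k%:R + 4)) * total_weight arc w.
Proof.
case: k => // j _ noloop _ hdeg.
have few_colours : (2 * j.+1 < (2 * j + 1).+2)%N by lia.
have [c proper_c] :=
  degenerate_coloring noloop (bounded_degree_degenerate hdeg) few_colours.
have := coloring_average_cut w j.+1 proper_c.
rewrite binomial_ratio -mulrA ler_pM2l // ltr0n bin_gt0; lia.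
Qed.
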